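(* Fix a finite candidate set $C$ with $|C|=m$, and work on $\mathcal E(C)$, the elections with candidate set $C$. (a) If $\mathcal K$ is a reversal-symmetric $m$-consensus on $\mathcal E(C)$ and $d$ is a reversal-symmetric map $\mathcal E(C)\times\mathcal E(C)\to[0,\infty]$, then $\mathcal R(\mathcal K,d)$ is reversal symmetric, i.e. $\mathcal R(\mathcal K,d)(\mathrm{rev}(E))=\{\mathrm{rev}(r):r\in\mathcal R(\mathcal K,d)(E)\}$ for all $E$. (b) Conversely, if $R$ is a reversal-symmetric social welfare rule on $\mathcal E(C)$ that is distance rationalizable, then $R$ is distance rationalizable with respect to some $(\mathcal K,d)$ with $\mathcal K$ and $d$ both reversal symmetric.
   Context: $L(C)$ is the set of strict linear orders of $C$. An election with candidate set $C$ is $E=(C,V,\pi)$ with $V$ a finite nonempty subset of a fixed countably infinite voter set $V^*$ and $\pi:V\to L(C)$; $\mathcal E(C)$ is the set of these. For $\rho\in L(C)$, $\mathrm{rev}(\rho)$ is the reversed order, and $\mathrm{rev}(C,V,\pi)=(C,V,\mathrm{rev}\circ\pi)$. A social welfare rule on $\mathcal E(C)$ assigns to each $E$ a nonempty subset $R(E)\subseteq L(C)$; it is reversal symmetric if $R(\mathrm{rev}(E))=\mathrm{rev}(R(E))$. An $m$-consensus is a map $\mathcal K$ from $D(\mathcal K)\subseteq\mathcal E(C)$ to $L(C)$, $\mathcal K_r=\mathcal K^{-1}(r)$; it is reversal symmetric if $D(\mathcal K)$ is closed under $\mathrm{rev}$ and $\mathcal K(\mathrm{rev}(E))=\mathrm{rev}(\mathcal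 K(E))$. A map $d$ is reversal symmetric if $d(\mathrm{rev}(E),\mathrm{rev}(E'))=d(E,E')$. A distance is $d:\mathcal E(C)\times\mathcal E(C)\to[0,\infty]$ with $d(E,E)=0$ and the triangle inequality. $d(E,A)=\inf_{F\in A}d(E,F)$ ($\infty$ if $A=\emptyset$), and $\mathcal R(\mathcal K,d)(E)$ is the set of $r\in L(C)$ with $d(E,\mathcal K_r)=\min_{r'\in L(C)}d(E,\mathcal K_{r'})$. $R$ is distance rationalizable with respect to $(\mathcal K,d)$ if $d$ is a distance, $d(x,y)>0$ whenever $x\in\mathcal K_r,y\in\mathcal K_{r'},r\ne r'$, and $R=\mathcal R(\mathcal K,d)$; $R$ is distance rationalizable if some such pair exists. *)

From HB Require Import structures.
From mathcomp Require Import all_boot.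
From Stdlib Require Import Reals ClassicalEpsilon.

Set Implicit Arguments.
Unset Strict Implicit.
Unset Printing Implicit Defensive.

Definition is_slo (C : finType) (f : {ffun C * C -> bool}) : bool :=
  [&& [forall x, ~~ f (x, x)],
      [forall x, forall y, forall z, f (x, y) && f (y, z) ==> f (x, z)]
    & [forall x, forall y, (x != y) ==> f (x, y) || f (y, x)]].

(* L(C): a strict linear order, as a relation (x,y) |-> "x is ranked above y" *)
Definition linord (C : finType) := {f : {ffun C * C -> bool} | is_slo f}.

Definition rev_rel (C : finType) (f : {ffun C * C -> bool}) : {ffun C * C -> bool} :=
  [ffun p => f (p.2, p.1)].

Lemma rev_rel_slo (C : finType) (f : {ffun C * C -> bool}) :
  is_slo f -> is_slo (rev_rel f).
Proof.
case/and3P=> /forallP Hi /forallP Ht /forallP Hl.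
apply/and3P; split.
- by apply/forallP=> x; rewrite /rev_rel ffunE.
- apply/forallP=> x; apply/forallP=> y; apply/forallP=> z.
  rewrite /rev_rel !ffunE /=; apply/implyP=> /andP[h1 h2].
  by move: (Ht z) => /forallP /(_ y) /forallP /(_ x) /implyP; apply; rewrite h2 h1.
- apply/forallP=> x; apply/forallP=> y; rewrite /rev_rel !ffunE /=.
  apply/implyP=> hxy.
  by move: (Hl x) => /forallP /(_ y) /implyP /(_ hxy); rewrite orbC.
Qed.

Definition revL (C : finType) (r : linord C) : linord C :=
  exist _ (rev_rel (val r)) (rev_rel_slo (valP r)).

(* An election (C, V, pi) with V a finite nonempty subset of V* = nat and
   pi : V -> L(C), canonically encoded as the graph of pi listed by
   strictly increasing voter. *)
Definition wf_votes (C : finType) (s : seq (nat * linord C)) : bool :=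
  (s != [::]) && sorted ltn (map fst s).

Definition election (C : finType) := {s : seq (nat * linord C) | wf_votes s}.

Lemma revE_wf (C : finType) (s : seq (nat * linord C)) :
  wf_votes s -> wf_votes (map (fun p => (p.1, revL p.2)) s).
Proof.
case/andP=> hn hs; apply/andP; split.
- by case: s hn {hs}.
- by rewrite -map_comp.
Qed.

Definition revE (C : finType) (E : election C) : election C :=
  exist _ (map (fun p => (p.1, revL p.2)) (val E)) (revE_wf (valP E)).

(* None = oo *)
Definition ext := option R.

Definition ext_nonneg (x : ext) : Prop :=
  match x with Some a => Rle 0 a | None => True end.

Definition ext_le (x y : ext) : Prop :=
  match x, y with
  | _, None => True
  | None, Some _ => False
  | Some a, Some b => Rle a b
  end.

Definition ext_lt (x y : ext) : Prop :=
  match x, y with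
  | None, _ => False
  | Some _, None => True
  | Some a, Some b => Rlt a b
  end.

Definition ext_add (x y : ext) : ext :=
  match x, y with
  | Some a, Some b => Some (Rplus a b)
  | _, _ => None
  end.

Definition is_glb_ext (S : ext -> Prop) (x : ext) : Prop :=
  (forall y, S y -> ext_le x y) /\
  (forall z, (forall y, S y -> ext_le z y) -> ext_le z x).

Lemma ext_inhabited : inhabited ext. Proof. exact: inhabits None. Qed.

(* infimum in [0,oo] (inf of the empty set is oo) *)
Definition ext_inf (S : ext -> Prop) : ext := epsilon ext_inhabited (is_glb_ext S).

Definition emap (C : finType) := election C -> election C -> ext.

Definition nonneg_map (C : finType) (d : emap C) : Prop :=
  forall E F, ext_nonneg (d E F).

Definition is_distance (C : finType) (d : emap C) : Prop :=
  nonneg_map d /\ (forall E, d E E = Some 0%R) /\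
  (forall E F G, ext_le (d E G) (ext_add (d E F) (d F G))).

Definition rev_sym_map (C : finType) (d : emap C) : Prop :=
  forall E F, d (revE E) (revE F) = d E F.

(* an m-consensus: partial map K : D(K) -> L(C); D(K) = {E | K E <> None} *)
Definition consensus (C : finType) := election C -> option (linord C).

Definition inD (C : finType) (K : consensus C) (E : election C) : Prop := K E <> None.

Definition Kr (C : finType) (K : consensus C) (r : linord C) (E : election C) : Prop :=
  K E = Some r.

Definition rev_sym_consensus (C : finType) (K : consensus C) : Prop :=
  (forall E, inD K E -> inD K (revE E)) /\
  (forall E, inD K E -> forall r, K E = Some r -> K (revE E) = Some (revL r)).

Definition dist_set (C : finType) (d : emap C) (E : election C)
  (A : election C -> Prop) : ext :=
  ext_inf (fun x => exists F, A F /\ x = d E F).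

Definition rule (C : finType) := election C -> linord C -> Prop.

Definition RKd (C : finType) (K : consensus C) (d : emap C) : rule C :=
  fun E r => forall r', ext_le (dist_set d E (Kr K r)) (dist_set d E (Kr K r')).

Definition is_swr (C : finType) (R : rule C) : Prop :=
  forall E, exists r, R E r.

Definition rev_sym_rule (C : finType) (R : rule C) : Prop :=
  forall E r, R (revE E) r <-> (exists r0, R E r0 /\ r = revL r0).

Definition dist_rat_wrt (C : finType) (R : rule C) (K : consensus C) (d : emap C) : Prop :=
  is_distance d /\
  (forall r r' x y, Kr K r x -> Kr K r' y -> r <> r' -> ext_lt (Some 0%R) (d x y)) /\
  (forall E r, R E r <-> RKd K d E r).

Definition dist_rat (C : finType) (R : rule C) : Prop :=
  exists K d, dist_rat_wrt R K d.

(* (a) Reversal is an involution of elections mapping [K_r] onto [K_(rev r)]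
   and preserving [d], so [d(rev E, K_(rev r)) = d(E, K_r)] and the minimizers
   of the two elections correspond under reversal.

   (b) If reversal fixes some linear order, then [C] has at most one element,
   reversal is the identity and any rationalization will do.  Otherwise
   [rev E <> E] for every election, and a reversal-symmetric pair [(K', d')] is
   built from [R] and [K] alone.  Its domain [T] consists of the elections [E]
   with [E] or [rev E] in [D(K)], together with the "rich" elections, whose
   outcome set [R(E)] is shared by infinitely many elections.  Each [E] in [T]
   gets a label in [R(E)], chosen on one election of each pair [{E, rev E}] and
   transported to the other by reversal; on a rich outcome class the labels are
   spread so that every order of the class is used infinitely often.  The
   distance from [E] to [G <> E] in [T] is [0] or [1] according to whether
   [R(G)] is included in [R(E)], plus, when [E] is itself in [T], a weight
   [w(G) > 0] tending to [0] along any injective sequence; the weight separates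
   distinct consensus classes.  All other distances are infinite, as are those
   from the elections outside [T] at which [R] ties all orders.  Then, away from
   the latter, [d'(E, K'_r)] is [0] for [r] in [R(E)] and at least [1]
   otherwise.  The infinitely many labelled elections needed to approach
   [d'(E, K'_r) = 0] come from the original rationalization: if [K F = a] and
   [r] in [R(F)] differs from [a], then [d(F, K_r) = 0] is approached by
   infinitely many elections of [K_r], whose outcome sets lie inside [R(F)]. *)
From mathcomp Require Import all_boot.
From Stdlib Require Import Reals Lra ClassicalEpsilon Classical
  FunctionalExtensionality PropExtensionality.

Set Implicit Arguments.
Unset Strict Implicit.
Unset Printing Implicit Defensive.

Lemma rev_relK (C : finType) : involutive (@rev_rel C).
Proof. by move=> f; apply/ffunP => -[x y]; rewrite /rev_rel !ffunE. Qed.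

Lemma revLK (C : finType) : involutive (@revL C).
Proof. by move=> r; apply: val_inj; rewrite /= rev_relK. Qed.

Lemma revL_inj (C : finType) : injective (@revL C).
Proof. exact: inv_inj (@revLK C). Qed.

Lemma revEK (C : finType) : involutive (@revE C).
Proof.
move=> E; apply: val_inj => /=; rewrite -map_comp.
by elim: (val E) => //= -[v r] s ->; rewrite /= revLK.
Qed.

Lemma revE_inj (C : finType) : injective (@revE C).
Proof. exact: inv_inj (@revEK C). Qed.

Section ReversalSymmetricRKd.
Variables (C : finType) (K : consensus C) (d : emap C).
Hypotheses (K_rev : rev_sym_consensus K) (d_rev : rev_sym_map d).

Lemma Kr_revL r F : Kr K (revL r) F <-> Kr K r (revE F).
Proof.
rewrite /Kr; split => KF.
- by rewrite (K_rev.2 F ltac:(by rewrite /inD KF) (revL r) KF) revLK.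
- by have := K_rev.2 (revE F) ltac:(by rewrite /inD KF) r KF; rewrite revEK.
Qed.

Lemma dist_set_revE E r :
  dist_set d (revE E) (Kr K r) = dist_set d E (Kr K (revL r)).
Proof.
rewrite /dist_set; f_equal; apply: functional_extensionality => x.
apply: propositional_extensionality; split.
- case=> F [KF ->]; exists (revE F); split; first by apply/Kr_revL; rewrite revEK.
  by rewrite -d_rev revEK.
- case=> F [KF ->]; exists (revE F); split; first by apply/Kr_revL.
  by rewrite d_rev.
Qed.

Lemma RKd_revE E r : RKd K d (revE E) r <-> RKd K d E (revL r).
Proof.
rewrite /RKd; split => h r'.
- by have := h (revL r'); rewrite !dist_set_revE revLK.
- by rewrite !dist_set_revE; apply: h.
Qed.

Lemma rev_sym_RKd : rev_sym_rule (RKd K d).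
Proof.
move=> E r; rewrite RKd_revE; split.
- by move=> h; exists (revL r); rewrite revLK.
- by case=> r0 [h ->]; rewrite revLK.
Qed.

End ReversalSymmetricRKd.

Local Open Scope R_scope.

Lemma ext_le_trans x y z : ext_le x y -> ext_le y z -> ext_le x z.
Proof. by case: x; case: y; case: z => //= *; lra. Qed.

Lemma ext_lt_not_le x y : ext_lt x y -> ~ ext_le y x.
Proof. by case: x; case: y => //= *; lra. Qed.

Lemma ext_not_le x y : ~ ext_le x y -> ext_lt y x.
Proof. by case: x; case: y => //= *; lra. Qed.

Lemma ext_not_lt x y : ~ ext_lt x y -> ext_le y x.
Proof. by case: x; case: y => //= *; lra. Qed.

Lemma ext_le_antisym x y : ext_le x y -> ext_le y x -> x = y.
Proof. by case: x; case: y => //= a b *; f_equal; lra. Qed.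

Lemma ext_le_oo x : ext_le x None.
Proof. by case: x. Qed.

Lemma ext_add_ool x : ext_add None x = None.
Proof. by case: x. Qed.

Lemma ext_add_oor x : ext_add x None = None.
Proof. by case: x. Qed.

Lemma ext_nonneg_ge0 x : ext_nonneg x -> ext_le (Some 0) x.
Proof. by case: x. Qed.

Lemma ext_glb_exists (S : ext -> Prop) :
  (forall x, S x -> ext_nonneg x) -> exists g, is_glb_ext S g.
Proof.
move=> S_ge0.
case: (classic (exists a, S (Some a))) => [[a0 Sa0]|S_oo]; last first.
  by exists None; split=> [[a Sa|//]|[]] //; case: S_oo; exists a.
pose N := fun x => S (Some (- x)).
have N_bound : bound N by exists 0 => x Nx; have := S_ge0 _ Nx; rewrite /=; lra.
have N_ne : exists x, N x by exists (- a0); rewrite /N Ropp_involutive.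
case: (completeness N N_bound N_ne) => m [m_ub m_lub].
exists (Some (- m)); split.
- case=> [a Sa|//] /=.
  have : N (- a) by rewrite /N Ropp_involutive.
  by move/m_ub; lra.
- case=> [c c_lb|c_lb] /=; last by have := c_lb _ Sa0.
  suff : is_upper_bound N (- c) by move/m_lub; lra.
  by move=> x Nx; have := c_lb _ Nx; rewrite /=; lra.
Qed.

Section ExtInf.
Variable S : ext -> Prop.
Hypothesis S_ge0 : forall x, S x -> ext_nonneg x.

Lemma ext_inf_glb : is_glb_ext S (ext_inf S).
Proof. by apply: epsilon_spec; apply: ext_glb_exists. Qed.

Lemma ext_inf_le x : S x -> ext_le (ext_inf S) x.
Proof. exact: ext_inf_glb.1. Qed.

Lemma ext_inf_ge z : (forall x, S x -> ext_le z x) -> ext_le z (ext_inf S).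
Proof. exact: ext_inf_glb.2. Qed.

Lemma ext_inf_ge0 : ext_le (Some 0) (ext_inf S).
Proof. by apply: ext_inf_ge => x /S_ge0 /ext_nonneg_ge0. Qed.

Lemma ext_inf_approx y : ext_lt (ext_inf S) y -> exists x, S x /\ ext_lt x y.
Proof.
move=> inf_lt; apply: NNPP => none_lt; apply: (ext_lt_not_le inf_lt).
apply: ext_inf_ge => x Sx; apply: ext_not_lt => x_lt.
by apply: none_lt; exists x.
Qed.

Lemma ext_inf_eq0 :
  (forall eps, 0 < eps -> exists x, S x /\ ext_le x (Some eps)) -> ext_inf S = Some 0.
Proof.
move=> small; apply: ext_le_antisym; last exact: ext_inf_ge0.
apply: NNPP => /ext_not_le; case E_inf: (ext_inf S) => [c|] /= c_gt0.
- case: (small (c / 2) ltac:(lra)) => x [Sx x_le].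
  have := ext_inf_le Sx; rewrite E_inf.
  by move: x_le; case: x {Sx} => [a|] //= *; lra.
- case: (small 1 ltac:(lra)) => x [Sx x_le].
  by have := ext_inf_le Sx; rewrite E_inf; move: x_le; case: x {Sx}.
Qed.

End ExtInf.

Lemma ext_gap (A : eqType) (l : seq A) (f : A -> ext) (P : A -> Prop) (mu : R) :
  (forall a, a \in l -> P a -> ext_lt (Some mu) (f a)) ->
  exists eta, mu < eta /\ forall a, a \in l -> P a -> ext_le (Some eta) (f a).
Proof.
elim: l => [|a l IH] f_gt; first by exists (mu + 1); split => //; lra.
case: IH => [b bl Pb|eta [mu_lt eta_le]]; first by apply: f_gt => //; rewrite inE bl orbT.
case: (classic (P a)) => [Pa|NPa]; last first.
  by exists eta; split => // b; rewrite inE => /orP [/eqP ->|/eta_le].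
have := f_gt a (mem_head _ _) Pa; case E_fa: (f a) => [v|] /= v_gt; last first.
  by exists eta; split => // b; rewrite inE => /orP [/eqP ->|/eta_le //]; rewrite E_fa.
exists (Rmin eta ((mu + v) / 2)); split; first by apply: Rmin_glb_lt => //; lra.
move=> b; rewrite inE => /orP [/eqP ->|bl] Pb.
- by have := Rmin_r eta ((mu + v) / 2); rewrite E_fa /=; lra.
- have := eta_le b bl Pb; case: (f b) => //= w.
  by have := Rmin_l eta ((mu + v) / 2); lra.
Qed.

Local Close Scope R_scope.

Definition infinite_set (T : eqType) (A : T -> Prop) : Prop :=
  forall l : seq T, exists x, A x /\ x \notin l.

Section InfiniteSets.
Variable T : eqType.
Implicit Types A B : T -> Prop.

Lemma infinite_set_mono A B :
  (forall x, A x -> B x) -> infinite_set A -> infinite_set B.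
Proof. by move=> AB infA l; case: (infA l) => x [/AB ? ?]; exists x. Qed.

Lemma infinite_set_ex A : infinite_set A -> exists x, A x.
Proof. by move=> infA; case: (infA [::]) => x [? _]; exists x. Qed.

Lemma finite_setP A : ~ infinite_set A -> exists l : seq T, forall x, A x -> x \in l.
Proof.
move=> finA; apply: NNPP => no_l; apply: finA => l; apply: NNPP => no_x; apply: no_l.
by exists l => x Ax; apply: NNPP => /negP xl; apply: no_x; exists x.
Qed.

Lemma infinite_set_inv (f : T -> T) A :
  involutive f -> infinite_set A -> infinite_set (fun y => A (f y)).
Proof.
move=> fK infA l; case: (infA (map f l)) => x [Ax xl].
exists (f x); rewrite fK; split => //.
by apply: contra xl => fxl; rewrite -(fK x) map_f.
Qed.

Lemma infinite_set_or A B :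
  infinite_set (fun x => A x \/ B x) -> infinite_set A \/ infinite_set B.
Proof.
move=> infAB; apply: NNPP => /not_or_and [/finite_setP [lA hA] /finite_setP [lB hB]].
by case: (infAB (lA ++ lB)) => x [[/hA|/hB] xl]; rewrite mem_cat xl ?orbT.
Qed.

Lemma infinite_set_pigeonhole (U : finType) A (f : T -> U) :
  infinite_set A -> exists y, infinite_set (fun x => A x /\ f x = y).
Proof.
move=> infA; apply: NNPP => no_y.
have fin y : exists l : seq T, forall x, A x -> f x = y -> x \in l.
  have [l hl] := finite_setP (fun inf => no_y (ex_intro _ y inf)).
  by exists l => x Ax fx; apply: hl.
pose lists y := proj1_sig (constructive_indefinite_description _ (fin y)).
have lists_cover y : forall x, A x -> f x = y -> x \in lists y.
  by rewrite /lists; case: constructive_indefinite_description.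
case: (infA (flatten [seq lists y | y <- enum U])) => x [Ax /negP []].
by apply/flattenP; exists (lists (f x)); [rewrite map_f ?mem_enum|apply: lists_cover].
Qed.

End InfiniteSets.

Lemma inj_nat_notin (T : eqType) (g : nat -> T) (l : seq T) :
  injective g -> exists n, g n \notin l.
Proof.
move=> g_inj; apply: NNPP => all_in.
have sub : {subset map g (iota 0 (size l).+1) <= l}.
  move=> _ /mapP [n _ ->]; apply: NNPP => /negP gn_l; apply: all_in; by exists n.
have := uniq_leq_size _ sub; rewrite map_inj_uniq // iota_uniq size_map size_iota.
by rewrite ltnn => /(_ isT).
Qed.

Section InjectiveSequence.
Variables (T : eqType) (X : T -> Prop).
Hypothesis infX : infinite_set X.

Let fresh (l : seq T) : T := proj1_sig (constructive_indefinite_description _ (infX l)).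

Let freshP l : X (fresh l) /\ fresh l \notin l.
Proof. by rewrite /fresh; case: constructive_indefinite_description. Qed.

Fixpoint fresh_prefix (n : nat) : seq T :=
  if n is n'.+1 then rcons (fresh_prefix n') (fresh (fresh_prefix n')) else [::].

Lemma infinite_set_injseq : exists h : nat -> T, injective h /\ forall n, X (h n).
Proof.
pose h n := fresh (fresh_prefix n).
have prefixE n : fresh_prefix n = map h (iota 0 n).
  elim: n => // n IH; change (rcons (fresh_prefix n) (h n) = map h (iota 0 n.+1)).
  by rewrite IH -addn1 iotaD map_cat /= cats1.
have h_neq m n : m < n -> h m != h n.
  move=> lt_mn; apply/eqP => e; have := (freshP (fresh_prefix n)).2.
  by rewrite -/(h n) -e prefixE map_f // mem_iota.
exists h; split; last by move=> n; exact: (freshP _).1.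
move=> m n e; case: (ltngtP m n) => // lt; have := h_neq _ _ lt; by rewrite e eqxx.
Qed.

End InjectiveSequence.

Lemma infinite_set_spread (T L : eqType) (X : T -> Prop) (x0 : L) (s : seq L) :
  infinite_set X -> exists lab : T -> L,
    (forall x, lab x \in x0 :: s) /\
    forall r, r \in x0 :: s -> infinite_set (fun x => X x /\ lab x = r).
Proof.
case/infinite_set_injseq => h [h_inj Xh].
pose N := size (x0 :: s).
pose lab x := match excluded_middle_informative (exists n, h n = x) with
  | left e => nth x0 (x0 :: s) (proj1_sig (constructive_indefinite_description _ e) %% N)
  | right _ => x0 end.
have labE n : lab (h n) = nth x0 (x0 :: s) (n %% N).
  rewrite /lab; case: excluded_middle_informative => [e|[]]; last by exists n.
  by case: (constructive_indefinite_description _ _) => m /= /h_inj ->.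
exists lab; split=> [x|r r_in l].
  rewrite /lab; case: excluded_middle_informative => [e|_]; last exact: mem_head.
  by rewrite mem_nth // ltn_mod.
pose j := index r (x0 :: s).
have g_inj : injective (fun k => h (j + k * N)).
  by move=> k1 k2 /h_inj /addnI /eqP; rewrite eqn_mul2r /N /= => /eqP.
case: (inj_nat_notin l g_inj) => k hk_l; exists (h (j + k * N)); split=> //; split=> //.
by rewrite labE addnC modnMDl modn_small ?index_mem // nth_index.
Qed.

Section Weight.
Local Open Scope R_scope.
Variables (T : countType) (rv : T -> T).

Definition weight (x : T) : R := / (INR (pickle x + pickle (rv x)) + 1).

Lemma weight_gt0 x : 0 < weight x.
Proof.
by apply: Rinv_0_lt_compat; have := pos_INR (pickle x + pickle (rv x)); lra.
Qed.

Lemma weight_inv : involutive rv -> forall x, weight (rv x) = weight x.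
Proof. by move=> rvK x; rewrite /weight rvK addnC. Qed.

Lemma weight_small (A : T -> Prop) (eps : R) (x0 : T) :
  infinite_set A -> 0 < eps -> exists x, A x /\ x != x0 /\ weight x < eps.
Proof.
move=> infA eps_gt0.
case: (INR_unbounded (/ eps)) => N N_gt.
case: (infA (x0 :: pmap unpickle (iota 0 N))) => x [Ax].
rewrite inE negb_or => /andP [x_neq x_notin].
exists x; split => //; split => //.
have N_le : (N <= pickle x)%nat.
  rewrite leqNgt; apply: contra x_notin => x_lt.
  by rewrite mem_pmap -pickleK map_f // mem_iota.
have N_le' : INR N <= INR (pickle x + pickle (rv x)).
  by apply: le_INR; apply/leP; apply: leq_trans N_le (leq_addr _ _).
have inv_eps_gt0 : 0 < / eps by apply: Rinv_0_lt_compat.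
rewrite /weight -(Rinv_inv eps).
by apply: Rinv_lt_contravar; [apply: Rmult_lt_0_compat|]; lra.
Qed.

End Weight.

Lemma revL_fixed_id (C : finType) (r0 : linord C) :
  revL r0 = r0 -> forall r : linord C, revL r = r.
Proof.
move=> r0_fixed.
have r0_sym p : val r0 p = val r0 (p.2, p.1).
  by have := congr1 (fun r : linord C => val r p) r0_fixed; rewrite /= /rev_rel ffunE => <-.
have C_sub (x y : C) : x = y.
  apply/eqP; apply: contraT => xy.
  case/and3P: (valP r0) => /forallP irr /forallP trans /forallP tot.
  move: (tot x) => /forallP /(_ y) /implyP /(_ xy).
  rewrite -(r0_sym (x, y)) /= orbb => r0xy.
  have r0yx : val r0 (y, x) by rewrite r0_sym.
  move: (trans x) => /forallP /(_ y) /forallP /(_ x) /implyP.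
  by rewrite r0xy r0yx => /(_ isT); rewrite (negbTE (irr x)).
move=> r; apply: val_inj; apply/ffunP => -[x y].
by rewrite /= /rev_rel ffunE /= (C_sub x y).
Qed.

Lemma revE_id (C : finType) :
  (forall r : linord C, revL r = r) -> forall E : election C, revE E = E.
Proof.
move=> revL_id E; apply: val_inj => /=.
by rewrite -[RHS]map_id; apply: eq_map => -[v r] /=; rewrite revL_id.
Qed.

(* Decides which of [E] and [rev E] is the representative of the pair, by
   comparing the first vote with its reversal. *)
Definition orient (C : finType) (E : election C) : bool :=
  if val E is (_, r) :: _ then (enum_rank (val r) < enum_rank (rev_rel (val r)))%N
  else false.

Lemma orient_revE (C : finType) : (forall r : linord C, revL r <> r) ->
  forall E : election C, orient (revE E) = ~~ orient E.
Proof.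
move=> revL_neq E; rewrite /orient /=.
case: E => -[|[v r] s] /= wf; first by case/andP: wf.
rewrite rev_relK.
have neq : val r != rev_rel (val r).
  by apply/eqP => e; apply: (revL_neq r); apply: val_inj; rewrite /= -e.
have rank_neq : (enum_rank (val r) : nat) != enum_rank (rev_rel (val r)).
  by apply: contra neq => /eqP /val_inj /enum_rank_inj e; rewrite -e.
by rewrite ltnNge leq_eqVlt (negbTE rank_neq).
Qed.

Definition classicb (P : Prop) : bool := if excluded_middle_informative P then true else false.

Lemma classicbP (P : Prop) : reflect P (classicb P).
Proof. by rewrite /classicb; case: excluded_middle_informative => h; constructor. Qed.

Lemma classicb_iff (P Q : Prop) : (P <-> Q) -> classicb P = classicb Q.
Proof. by move=> PQ; apply/idP/idP => /classicbP H; apply/classicbP; apply/PQ. Qed.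

Section SymmetricRationalization.
Local Open Scope R_scope.
Variables (C : finType) (rl : rule C) (K : consensus C) (d : emap C).
Hypotheses (rl_swr : is_swr rl) (rl_rev : rev_sym_rule rl) (d_dist : is_distance d)
  (d_sep : forall r r' x y, Kr K r x -> Kr K r' y -> r <> r' -> ext_lt (Some 0) (d x y))
  (rl_RKd : forall E r, rl E r <-> RKd K d E r)
  (revL_neq : forall r : linord C, revL r <> r).

Definition dist_class E r := dist_set d E (Kr K r).

Lemma dist_class_values_ge0 E r x :
  (exists F, Kr K r F /\ x = d E F) -> ext_nonneg x.
Proof. by case=> F [_ ->]; apply: d_dist.1. Qed.

Lemma dist_class_le E r F : K F = Some r -> ext_le (dist_class E r) (d E F).
Proof. by move=> KF; apply: ext_inf_le; [exact: dist_class_values_ge0|exists F]. Qed.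

Lemma dist_class_ge0 E r : ext_le (Some 0) (dist_class E r).
Proof. exact: ext_inf_ge0 (@dist_class_values_ge0 E r). Qed.

Lemma rl_iff E r : rl E r <-> forall r', ext_le (dist_class E r) (dist_class E r').
Proof. exact: rl_RKd. Qed.

Lemma rl_revE_revL E r : rl (revE E) (revL r) <-> rl E r.
Proof. by rewrite rl_rev; split=> [[r0 [? /revL_inj ->]] //|?]; exists r. Qed.

Lemma rl_revE E r : rl (revE E) r <-> rl E (revL r).
Proof. by have := rl_revE_revL E (revL r); rewrite revLK. Qed.

Lemma dist_class_consensus F a : K F = Some a -> dist_class F a = Some 0.
Proof.
move=> KF; apply: ext_le_antisym; last exact: dist_class_ge0.
by have := dist_class_le F KF; rewrite (d_dist.2.1 F).
Qed.

Lemma rl_consensus_iff F a t :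
  K F = Some a -> rl F t <-> ext_le (dist_class F t) (Some 0).
Proof.
move=> KF; rewrite rl_iff; split.
- by move/(_ a); rewrite (dist_class_consensus KF).
- by move=> t_le r'; apply: ext_le_trans t_le (dist_class_ge0 _ _).
Qed.

Lemma rl_consensus F a : K F = Some a -> rl F a.
Proof.
by move=> KF; apply/(rl_consensus_iff a KF); rewrite (dist_class_consensus KF) /=; lra.
Qed.

Lemma dist_class_lt E t r : ~ rl E t -> rl E r -> ext_lt (dist_class E r) (dist_class E t).
Proof.
rewrite !rl_iff => NEt Er; apply: NNPP => /ext_not_lt t_le; apply: NEt => r'.
exact: ext_le_trans t_le (Er r').
Qed.

Definition Rsub (G E : election C) := forall r, rl G r -> rl E r.

Lemma Rsub_revE G E : Rsub (revE G) (revE E) <-> Rsub G E.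
Proof.
by split=> sub r; [move/rl_revE_revL/sub/rl_revE_revL|move/rl_revE/sub/rl_revE].
Qed.

Lemma dist_class_gap E r mu : rl E r -> dist_class E r = Some mu ->
  exists eta, mu < eta /\ forall t, ~ rl E t -> ext_le (Some eta) (dist_class E t).
Proof.
move=> Er E_mu.
case: (@ext_gap _ (enum {: linord C}) (dist_class E) (fun t => ~ rl E t) mu).
  by move=> t _ NEt; rewrite -E_mu; apply: dist_class_lt.
by move=> eta [mu_lt eta_le]; exists eta; split=> // t; apply: eta_le; rewrite mem_enum.
Qed.

(* If [H] had a winner [t] outside [R(X)], the elections of [K_t] arbitrarily
   close to [H] would, by the triangle inequality, be closer to [X] than [eta]. *)
Lemma consensus_near X r eta : rl X r -> ext_lt (dist_class X r) (Some eta) ->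
  (forall t, ~ rl X t -> ext_le (Some eta) (dist_class X t)) ->
  exists H, K H = Some r /\ ext_lt (d X H) (Some eta) /\ Rsub H X.
Proof.
move=> Xr r_lt gap.
case: (ext_inf_approx (@dist_class_values_ge0 X r) r_lt) => _ [[H [KH ->]] XH_lt].
exists H; split => //; split => // t Ht; apply: NNPP => NXt.
have H_t0 : dist_class H t = Some 0.
  by apply: ext_le_antisym; [apply/(rl_consensus_iff _ KH)|apply: dist_class_ge0].
case E_XH: (d X H) XH_lt => [a|] //= a_lt.
have : ext_lt (dist_class H t) (Some (eta - a)) by rewrite H_t0 /=; lra.
case/(ext_inf_approx (@dist_class_values_ge0 H t)) => _ [[G [KG ->]] HG_lt].
have := d_dist.2.2 X H G; have := dist_class_le X KG; have := gap t NXt.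
move: HG_lt; rewrite E_XH.
by case: (d H G) => [b|] //=; case: (d X G) => [c|] //=;
  case: (dist_class X t) => [e|] //= *; lra.
Qed.

Lemma consensus_Rsub E r : (exists t, ~ rl E t) -> rl E r ->
  exists F, K F = Some r /\ Rsub F E.
Proof.
case=> t NEt Er; have := dist_class_lt NEt Er.
case E_mu: (dist_class E r) => [mu|] //= _.
case: (dist_class_gap Er E_mu) => eta [mu_lt gap].
by case: (consensus_near Er _ gap) => [|H [KH [_ sub]]]; [rewrite E_mu|exists H].
Qed.

(* [d(F, K_r) = 0] but every election of [K_r] lies at positive distance from [F]. *)
Lemma infinite_consensus_Rsub F a r : K F = Some a -> rl F r -> r <> a ->
  infinite_set (fun H => K H = Some r /\ Rsub H F).
Proof.
move=> KF Fr r_neq l.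
have F_r0 : dist_class F r = Some 0.
  by apply: ext_le_antisym; [apply/(rl_consensus_iff _ KF)|apply: dist_class_ge0].
case: (dist_class_gap Fr F_r0) => eta1 [eta1_gt0 gap].
case: (@ext_gap _ l (d F) (fun H => K H = Some r) 0).
  by move=> H _ KH; apply: (d_sep (r := a) (r' := r)) => //; apply: nesym.
move=> eta2 [eta2_gt0 eta2_le].
case: (consensus_near (eta := Rmin eta1 eta2) Fr).
- by rewrite F_r0 /=; apply: Rmin_glb_lt.
- move=> t NFt; apply: ext_le_trans (gap t NFt); rewrite /=; exact: Rmin_l.
- move=> H [KH [FH_lt sub]]; exists H; split => //.
  apply/negP => Hl; have := eta2_le H Hl KH.
  by move: FH_lt; case: (d F H) => [x|] //=; have := Rmin_r eta1 eta2; lra.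
Qed.

Definition Rset H : {set linord C} := [set r | classicb (rl H r)].

Lemma RsetP H r : r \in Rset H <-> rl H r.
Proof. by rewrite inE; split => /classicbP. Qed.

Lemma Rset_eq H1 H2 : Rset H1 = Rset H2 <-> forall r, rl H1 r <-> rl H2 r.
Proof.
split=> [e r|e]; last by apply/setP => r; rewrite !inE; apply: classicb_iff.
by rewrite -!RsetP e.
Qed.

Lemma Rset_revE H1 H2 : Rset (revE H1) = Rset (revE H2) <-> Rset H1 = Rset H2.
Proof.
rewrite !Rset_eq; split=> e r; last by rewrite !rl_revE e.
by rewrite -rl_revE_revL e rl_revE_revL.
Qed.

Definition rich H := infinite_set (fun H' => Rset H' = Rset H).

Lemma rich_revE H : rich (revE H) <-> rich H.
Proof.
have rich_rev G : rich G -> rich (revE G).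
  move/(infinite_set_inv (@revEK C)); apply: infinite_set_mono => G' e.
  by apply/Rset_revE; rewrite revEK.
by split=> [/rich_rev|/rich_rev //]; rewrite revEK.
Qed.

Definition some_rl H : linord C :=
  proj1_sig (constructive_indefinite_description _ (rl_swr H)).

Lemma some_rlP H : rl H (some_rl H).
Proof. by rewrite /some_rl; case: constructive_indefinite_description. Qed.

Definition oriented_class (S : {set linord C}) H := Rset H = S /\ orient H.

Definition spread (S : {set linord C}) : election C -> linord C :=
  match excluded_middle_informative (exists lab : election C -> linord C,
      (forall H, lab H \in S) /\
      forall r, r \in S -> infinite_set (fun H => oriented_class S H /\ lab H = r)) with
  | left e => proj1_sig (constructive_indefinite_description _ e)
  | right _ => some_rl
  end.

Lemma spread_spec S r0 : infinite_set (oriented_class S) -> r0 \in S ->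
  (forall H, spread S H \in S) /\
  forall r, r \in S -> infinite_set (fun H => oriented_class S H /\ spread S H = r).
Proof.
move=> infS r0S.
have ex : exists lab : election C -> linord C, (forall H, lab H \in S) /\
    forall r, r \in S -> infinite_set (fun H => oriented_class S H /\ lab H = r).
  case: (infinite_set_spread r0 (enum S) infS) => lab [lab_in lab_inf].
  exists lab; split=> [H|r rS]; last by apply: lab_inf; rewrite inE mem_enum rS orbT.
  by have := lab_in H; rewrite inE mem_enum => /orP [/eqP ->|].
rewrite /spread; case: excluded_middle_informative => [e|//].
by case: (constructive_indefinite_description _ e).
Qed.

Definition base_label H : linord C :=
  if classicb (rich H) then
    if classicb (infinite_set (oriented_class (Rset H))) then spread (Rset H) H
    else some_rl H
  else if K H is Some a then a
  else if K (revE H) is Some b then revL b else some_rl H.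

Lemma base_label_rl H : rl H (base_label H).
Proof.
rewrite /base_label; case: classicbP => _.
- case: classicbP => infS; last exact: some_rlP.
  have r0S : some_rl H \in Rset H by apply/RsetP; apply: some_rlP.
  by apply/RsetP; apply: (spread_spec infS r0S).1.
- case KH: (K H) => [a|]; first exact: rl_consensus KH.
  case KrH: (K (revE H)) => [b|]; last exact: some_rlP.
  by apply/rl_revE; apply: rl_consensus KrH.
Qed.

Definition label H : linord C :=
  if orient H then base_label H else revL (base_label (revE H)).

Lemma label_rl H : rl H (label H).
Proof.
rewrite /label; case: (orient H); first exact: base_label_rl.
by apply/rl_revE; apply: base_label_rl.
Qed.

Lemma label_revE H : label (revE H) = revL (label H).
Proof.
by rewrite /label (orient_revE revL_neq); case: (orient H); rewrite /= ?revEK ?revLK.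
Qed.

Definition in_dom H := rich H \/ K H <> None \/ K (revE H) <> None.

Lemma in_dom_revE H : in_dom (revE H) <-> in_dom H.
Proof. rewrite /in_dom rich_revE revEK; tauto. Qed.

Lemma label_consensus G : ~ rich G -> in_dom G ->
  K G = Some (label G) \/ K (revE G) = Some (revL (label G)).
Proof.
move=> Nrich domG; have Nrich' : ~ rich (revE G) by rewrite rich_revE.
rewrite /label /base_label; case: (orient G); case: classicbP => // _; rewrite ?revEK.
- case KG: (K G) => [a|]; first by left.
  case KrG: (K (revE G)) => [b|]; first by right; rewrite revLK.
  by case: domG => [|[]].
- case KrG: (K (revE G)) => [a|]; first by right; rewrite revLK.
  case KG: (K G) => [b|]; first by left; rewrite revLK.
  by case: domG => [|[]].
Qed.

Definition labelled_below G r :=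
  infinite_set (fun G' => in_dom G' /\ label G' = r /\ Rsub G' G).

Lemma labelled_below_revE G r : labelled_below (revE G) (revL r) -> labelled_below G r.
Proof.
move/(infinite_set_inv (@revEK C)); apply: infinite_set_mono => G' [domG' [labG' sub]].
split; first by apply/in_dom_revE.
split; first by apply: revL_inj; rewrite -label_revE.
by apply/Rsub_revE.
Qed.

Lemma spread_labels S t : infinite_set (oriented_class S) -> t \in S ->
  infinite_set (fun G => in_dom G /\ label G = t /\ Rset G = S).
Proof.
move=> infS tS; have [_ spread_inf] := spread_spec infS tS.
apply: infinite_set_mono (spread_inf t tS) => H [[RH oH] spreadH].
have richH : rich H by apply: infinite_set_mono infS => H' [e _]; rewrite e RH.
split; first by left.
split=> //; rewrite /label oH /base_label RH.
by case: classicbP => // _; case: classicbP.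
Qed.

Lemma rich_labels H0 r : rich H0 -> rl H0 r ->
  infinite_set (fun G => in_dom G /\ label G = r /\ Rset G = Rset H0).
Proof.
move=> richH0 H0r.
have : infinite_set (fun H =>
    oriented_class (Rset H0) H \/ oriented_class (Rset (revE H0)) (revE H)).
  apply: infinite_set_mono richH0 => H e.
  case oH: (orient H); [left|right] => //.
  by split; [apply/Rset_revE|rewrite (orient_revE revL_neq) oH].
case/infinite_set_or => [infS|/(infinite_set_inv (@revEK C)) infS].
  apply: infinite_set_mono (spread_labels infS (t := r) _); last by apply/RsetP.
  by move=> G [? [? ->]].
have {}infS : infinite_set (oriented_class (Rset (revE H0))).
  by apply: infinite_set_mono infS => y; rewrite revEK.
have rH0 : revL r \in Rset (revE H0) by apply/RsetP; apply/rl_revE_revL.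
have := spread_labels infS rH0.
move/(infinite_set_inv (@revEK C)); apply: infinite_set_mono => G [domG [labG RG]].
split; first by apply/in_dom_revE.
split; first by apply: revL_inj; rewrite -label_revE.
by apply/Rset_revE.
Qed.

Lemma rich_labelled_below H0 G r : rich H0 -> rl H0 r -> Rsub H0 G -> labelled_below G r.
Proof.
move=> richH0 H0r sub; apply: infinite_set_mono (rich_labels richH0 H0r).
move=> G' [domG' [labG' RG']]; split=> //; split=> // t G't.
by apply: sub; move/Rset_eq: RG' => <-.
Qed.

Lemma consensus_labelled_below F a r : K F = Some a -> rl F r -> r <> a ->
  labelled_below F r.
Proof.
move=> KF Fr r_neq.
case: (infinite_set_pigeonhole Rset (infinite_consensus_Rsub KF Fr r_neq)) => S infS.
case: (infinite_set_ex infS) => H0 [[KH0 sub] RH0].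
apply: (rich_labelled_below _ (rl_consensus KH0) sub).
by apply: infinite_set_mono infS => H [_ ->].
Qed.

Lemma in_dom_labelled_below G r : in_dom G -> rl G r -> r <> label G ->
  labelled_below G r.
Proof.
move=> domG Gr r_neq.
case: (classic (rich G)) => [richG|Nrich].
  exact: rich_labelled_below richG Gr (fun t Gt => Gt).
case: (label_consensus Nrich domG) => [KG|KrG].
  exact: consensus_labelled_below KG Gr r_neq.
apply/labelled_below_revE/(consensus_labelled_below KrG); first exact/rl_revE_revL.
by move/revL_inj.
Qed.

Lemma label_Rsub E r : ~ (forall t, rl E t) -> rl E r ->
  exists G, in_dom G /\ label G = r /\ Rsub G E.
Proof.
move=> Nall Er.
case: (consensus_Rsub (not_all_ex_not _ _ Nall) Er) => F [KF subFE].
have domF : in_dom F by right; left; rewrite KF.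
case: (classic (label F = r)) => [labF|labF]; first by exists F.
case: (infinite_set_ex (in_dom_labelled_below domF (rl_consensus KF) (nesym labF))).
by move=> G [domG [labG subGF]]; exists G; split=> //; split=> // t /subGF /subFE.
Qed.

Definition Ksym H : option (linord C) := if classicb (in_dom H) then Some (label H) else None.

Lemma KsymE G r : Ksym G = Some r <-> in_dom G /\ label G = r.
Proof. by rewrite /Ksym; case: classicbP => domG; split=> // -[] // _ <-. Qed.

(* Kept at infinite distance from the whole domain, so that all orders tie. *)
Definition isolated E := ~ in_dom E /\ forall r, rl E r.

Lemma isolated_revE E : isolated (revE E) <-> isolated E.
Proof.
rewrite /isolated in_dom_revE.
by split=> -[NdomE all_r]; split=> // r; [apply/rl_revE_revL|apply/rl_revE].
Qed.

Definition dsym (E G : election C) : ext :=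
  if E == G then Some 0
  else if classicb (in_dom G /\ ~ isolated E) then
    Some ((if classicb (Rsub G E) then 0 else 1) +
          (if classicb (in_dom E) then weight (@revE C) G else 0))
  else None.

Lemma dsym_ge0 E G : ext_nonneg (dsym E G).
Proof.
rewrite /dsym; case: eqP => _ /=; first lra.
case: classicbP => _ //=; have := weight_gt0 (@revE C) G.
by case: classicbP => _; case: classicbP => _; lra.
Qed.

Lemma dsym_refl E : dsym E E = Some 0.
Proof. by rewrite /dsym eqxx. Qed.

Lemma dsym_triangle E F G : ext_le (dsym E G) (ext_add (dsym E F) (dsym F G)).
Proof.
case: (eqVneq E G) => [<-|EG].
  rewrite dsym_refl; have := dsym_ge0 E F; have := dsym_ge0 F E.
  by case: (dsym E F) => [a|] //=; case: (dsym F E) => [b|] //= *; lra.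
case: (eqVneq E F) => [<-|EF]; first by rewrite dsym_refl; case: (dsym E G) => [a|] //=; lra.
case: (eqVneq F G) => [<-|FG]; first by rewrite dsym_refl; case: (dsym E F) => [a|] //=; lra.
rewrite /dsym (negbTE EG) (negbTE EF) (negbTE FG).
case: (classicbP (in_dom F /\ ~ isolated E)) => [[domF NisoE]|_]; last first.
  by rewrite ext_add_ool; apply: ext_le_oo.
case: (classicbP (in_dom G /\ ~ isolated F)) => [[domG _]|_]; last first.
  by rewrite ext_add_oor; apply: ext_le_oo.
case: classicbP => [_|[]] //; have -> : classicb (in_dom F) = true by apply/classicbP.
have sub_trans : (if classicb (Rsub G E) then 0 else 1) <=
    (if classicb (Rsub F E) then 0 else 1) + (if classicb (Rsub G F) then 0 else 1).
  case: classicbP => GE; case: classicbP => FE; case: classicbP => GF; try lra.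
  by case: GE => t /GF /FE.
have := weight_gt0 (@revE C) F; have := weight_gt0 (@revE C) G.
move: sub_trans; case: (classicb (Rsub G E)); case: (classicb (Rsub F E));
  case: (classicb (Rsub G F)); case: (classicb (in_dom E)) => /=; lra.
Qed.

Lemma dsym_revE E G : dsym (revE E) (revE G) = dsym E G.
Proof.
rewrite /dsym (inj_eq (@revE_inj C)) (weight_inv (@revEK C)).
rewrite (classicb_iff (Rsub_revE G E)) (classicb_iff (in_dom_revE E)).
have dom_iso : in_dom (revE G) /\ ~ isolated (revE E) <-> in_dom G /\ ~ isolated E.
  by rewrite in_dom_revE isolated_revE.
by rewrite (classicb_iff dom_iso).
Qed.

Definition dist_Ksym E r := dist_set dsym E (Kr Ksym r).

Lemma dist_Ksym_values_ge0 E r x :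
  (exists G, Kr Ksym r G /\ x = dsym E G) -> ext_nonneg x.
Proof. by case=> G [_ ->]; apply: dsym_ge0. Qed.

Lemma dist_Ksym_isolated E r : isolated E -> dist_Ksym E r = None.
Proof.
move=> isoE; apply: ext_le_antisym; first exact: ext_le_oo.
apply: ext_inf_ge; first exact: dist_Ksym_values_ge0.
move=> _ [G [/KsymE [domG _] ->]].
have EG : E != G by apply/eqP => e; apply: isoE.1; rewrite e.
by rewrite /dsym (negbTE EG); case: classicbP => // -[_ []].
Qed.

Lemma dsym_in_dom_near E G : G != E -> in_dom E -> in_dom G -> Rsub G E ->
  dsym E G = Some (weight (@revE C) G).
Proof.
move=> GE domE domG sub; rewrite /dsym eq_sym (negbTE GE).
case: classicbP => [_|[]]; last by split=> // -[].
by case: classicbP => [_|[]] //; case: classicbP => [_|[]] //=; rewrite Rplus_0_l.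
Qed.

(* Outside the domain the labels come from [label_Rsub]; inside, the elections
   labelled [r] below [E] have arbitrarily small weights. *)
Lemma dist_Ksym_rl E r : ~ isolated E -> rl E r -> dist_Ksym E r = Some 0.
Proof.
move=> NisoE Er; apply: ext_inf_eq0; first exact: dist_Ksym_values_ge0.
move=> eps eps_gt0.
case: (classic (in_dom E)) => [domE|NdomE].
- case: (classic (label E = r)) => [labE|labE].
    exists (Some 0); split; last by rewrite /=; lra.
    by exists E; split; [apply/KsymE|rewrite dsym_refl].
  have below := in_dom_labelled_below domE Er (nesym labE).
  case: (weight_small (@revE C) E below eps_gt0) => G [[domG [labG sub]] [GE w_lt]].
  exists (dsym E G); split; first by exists G; split=> //; apply/KsymE.
  by rewrite dsym_in_dom_near //=; lra.
- have Nall : ~ (forall t, rl E t) by move=> all_t; apply: NisoE.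
  case: (label_Rsub Nall Er) => G [domG [labG sub]].
  have EG : E != G by apply/eqP => e; apply: NdomE; rewrite e.
  exists (dsym E G); split; first by exists G; split=> //; apply/KsymE.
  rewrite /dsym (negbTE EG); case: classicbP => [_|[]]; last by split.
  by case: classicbP => [_|[]] //; case: classicbP => [//|_] /=; lra.
Qed.

Lemma dist_Ksym_notrl E r : ~ isolated E -> ~ rl E r -> ext_le (Some 1) (dist_Ksym E r).
Proof.
move=> NisoE NEr; apply: ext_inf_ge; first exact: dist_Ksym_values_ge0.
move=> _ [G [/KsymE [domG labG] ->]].
have Gr : rl G r by rewrite -labG; apply: label_rl.
have EG : E != G by apply/eqP => e; apply: NEr; rewrite e.
rewrite /dsym (negbTE EG); case: classicbP => [_|[]]; last by split.
case: classicbP => [sub|_]; first by case: NEr; apply: sub.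
by have := weight_gt0 (@revE C) G; case: classicbP => _ /=; lra.
Qed.

Lemma Ksym_rev_sym : rev_sym_consensus Ksym.
Proof.
split=> [E|E _ r /KsymE [domE <-]].
  rewrite /inD /Ksym; case: classicbP => // domE _.
  by case: classicbP => // -[]; apply/in_dom_revE.
by apply/KsymE; rewrite label_revE in_dom_revE.
Qed.

Lemma dsym_distance : is_distance dsym.
Proof. by split; [exact: dsym_ge0|split; [exact: dsym_refl|exact: dsym_triangle]]. Qed.

Lemma dsym_sep r r' x y : Kr Ksym r x -> Kr Ksym r' y -> r <> r' ->
  ext_lt (Some 0) (dsym x y).
Proof.
move=> /KsymE [domx labx] /KsymE [domy laby] rr'.
have xy : x != y by apply/eqP => e; apply: rr'; rewrite -labx -laby e.
rewrite /dsym (negbTE xy); case: classicbP => [_|[]]; last by split=> // -[].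
have := weight_gt0 (@revE C) y; case: (classicbP (in_dom x)) => [_|//].
by case: classicbP => _ /=; lra.
Qed.

Lemma rl_RKd_Ksym E r : rl E r <-> RKd Ksym dsym E r.
Proof.
change (rl E r <-> forall r', ext_le (dist_Ksym E r) (dist_Ksym E r')).
case: (classic (isolated E)) => [isoE|NisoE].
  by split=> [_ r'|_]; [rewrite !dist_Ksym_isolated|apply: isoE.2].
split=> [Er r'|min_r].
  by rewrite (dist_Ksym_rl NisoE Er); exact: ext_inf_ge0 (@dist_Ksym_values_ge0 E r').
apply: NNPP => NEr; case: (rl_swr E) => r0 Er0.
have := ext_le_trans (dist_Ksym_notrl NisoE NEr) (min_r r0).
by rewrite (dist_Ksym_rl NisoE Er0) /=; lra.
Qed.

End SymmetricRationalization.

Lemma rev_sym_dist_rat (C : finType) (rl : rule C) :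
  is_swr rl -> rev_sym_rule rl -> dist_rat rl ->
  exists (K : consensus C) (d : emap C),
    rev_sym_consensus K /\ rev_sym_map d /\ dist_rat_wrt rl K d.
Proof.
move=> rl_swr rl_rev [K [d [d_dist [d_sep rl_RKd]]]].
case: (classic (exists r : linord C, revL r = r)) => [[r0 /revL_fixed_id revL_id]|no_fix].
  have revE_idC := revE_id revL_id.
  exists K, d; split; last by split; [move=> E F; rewrite !revE_idC|split].
  by split=> [E|E _ r]; rewrite revE_idC // revL_id.
have revL_neq (r : linord C) : revL r <> r by move=> e; apply: no_fix; exists r.
exists (Ksym K rl_swr), (dsym rl K).
split; first exact: Ksym_rev_sym.
split; first by move=> E G; apply: dsym_revE.
split; first exact: dsym_distance.
split=> [r r' x y|E r]; first exact: dsym_sep.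
exact: (rl_RKd_Ksym _ rl_rev d_dist d_sep rl_RKd revL_neq).
Qed.

Theorem proposition4p15 (C : finType) :
  (forall (K : consensus C) (d : emap C),
      rev_sym_consensus K -> nonneg_map d -> rev_sym_map d ->
      rev_sym_rule (RKd K d)) /\
  (forall R : rule C,
      is_swr R -> rev_sym_rule R -> dist_rat R ->
      exists (K : consensus C) (d : emap C),
        rev_sym_consensus K /\ rev_sym_map d /\ dist_rat_wrt R K d).
Proof.
split; first by move=> K d K_rev _ d_rev; exact: rev_sym_RKd. (* no need for d >= 0 *)
exact: rev_sym_dist_rat.
Qed.
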